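(* Let $\widehat{A}=A+\epsilon B$ and $\widehat{C}=C+\epsilon D$ with $A,B,C,D\in\mathbb{R}^{n\times n}$ be such that the dual Moore-Penrose generalized inverses of $\widehat{A}$, $\widehat{C}$ and $\widehat{A}\widehat{C}$ exist and have the particular form $\widehat{A}^{\dagger}=A^{\dagger}-\epsilon A^{\dagger}BA^{\dagger}$, $\widehat{C}^{\dagger}=C^{\dagger}-\epsilon C^{\dagger}DC^{\dagger}$, $(\widehat{A}\widehat{C})^{\dagger}=(AC)^{\dagger}-\epsilon (AC)^{\dagger}(AD+BC)(AC)^{\dagger}$. If $AC=CA$, $A^*C=CA^*$, $C^{\dagger}B=BC^{\dagger}$ and $A^{\dagger}D=DA^{\dagger}$, then $(\widehat{A}\widehat{C})^{\dagger}=\widehat{A}^{\dagger}\widehat{C}^{\dagger}=\widehat{C}^{\dagger}\widehat{A}^{\dagger}$.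
   Context: A dual number is $a+\epsilon b$ with $a,b\in\mathbb{R}$, where $\epsilon\neq 0$, $\epsilon^2=0$ and $\epsilon$ commutes with reals. A dual matrix is $A+\epsilon B$ with $A,B$ real; sums and products are computed formally using $\epsilon^2=0$, transposition is $(A+\epsilon B)^T=A^T+\epsilon B^T$, and equality means equality of real and dual parts. $A^\dagger$ is the Moore-Penrose inverse and $A^*$ the (conjugate) transpose of a real matrix $A$. The dual Moore-Penrose generalized inverse (DMPGI) $\widehat{A}^\dagger$ of a dual matrix $\widehat{A}$ is the unique dual matrix $\widehat{X}$ (if it exists) with $\widehat{A}\widehat{X}\widehat{A}=\widehat{A}$, $\widehat{X}\widehat{A}\widehat{X}=\widehat{X}$, $(\widehat{A}\widehat{X})^T=\widehat{A}\widehat{X}$, $(\widehat{X}\widehat{A})^T=\widehat{X}\widehat{A}$. *)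

From HB Require Import structures.
From mathcomp Require Import all_boot all_order all_algebra.
From mathcomp Require Import reals.
Set Implicit Arguments. Unset Strict Implicit. Unset Printing Implicit Defensive.
Import GRing.Theory Num.Theory.
Local Open Scope ring_scope.

(* X is the Moore-Penrose inverse of the real matrix A (A^* = A^T over R). *)
Definition is_MP (R : realType) (n : nat) (A X : 'M[R]_n) : Prop :=
  [/\ A *m X *m A = A, X *m A *m X = X,
      (A *m X)^T = A *m X & (X *m A)^T = X *m A].

(* Dual matrix A + eps B represented by the pair (A, B). *)
Definition dualmx (R : realType) (n : nat) := ('M[R]_n * 'M[R]_n)%type.

Definition dmul (R : realType) (n : nat) (P Q : dualmx R n) : dualmx R n :=
  (P.1 *m Q.1, P.1 *m Q.2 + P.2 *m Q.1).

Definition dtr (R : realType) (n : nat) (P : dualmx R n) : dualmx R n :=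
  (P.1^T, P.2^T).

Definition is_DMPGI (R : realType) (n : nat) (A X : dualmx R n) : Prop :=
  [/\ dmul (dmul A X) A = A, dmul (dmul X A) X = X,
      dtr (dmul A X) = dmul A X & dtr (dmul X A) = dmul X A].

(** A matrix commuting with both A and A^T commutes with A^†.  Applying this
    to C and C^T against A, then to A and A^† against C, makes A, A^†, C, C^†
    pairwise commute.  Then A^† C^† satisfies the four Penrose equations for
    AC, so it is (AC)^† by uniqueness.  The dual parts agree after moving
    factors past each other and absorbing A^† A A^† = A^† and
    C^† C C^† = C^†. *)
From mathcomp Require Import all_boot all_algebra.
From mathcomp Require Import reals.

Set Implicit Arguments.
Unset Strict Implicit.
Unset Printing Implicit Defensive.
Import GRing.Theory.
Local Open Scope ring_scope.

Section MoorePenrose.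

Variables (R : realType) (n : nat).
Implicit Types A Ad X Y Z T : 'M[R]_n.

Lemma comm_mx_tr X Y : comm_mx X Y -> comm_mx X^T Y^T.
Proof. by move=> XY; rewrite /comm_mx -!trmx_mul XY. Qed.

Lemma comm_mxCA X Y Z : comm_mx X Y -> X *m (Y *m Z) = Y *m (X *m Z).
Proof. by move=> XY; rewrite !mulmxA XY. Qed.

Lemma comm_mxACA X Y Z T :
  comm_mx Y Z -> X *m Y *m (Z *m T) = X *m Z *m (Y *m T).
Proof. by move=> YZ; rewrite -mulmxA (mulmxA Y) YZ !mulmxA. Qed.

Lemma comm_mxMM X Y Z T : comm_mx X Z -> comm_mx X T -> comm_mx Y Z ->
  comm_mx Y T -> comm_mx (X *m Y) (Z *m T).
Proof.
move=> XZ XT YZ YT; apply: comm_mx_sym.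
by apply: comm_mxM; apply: comm_mx_sym; apply: comm_mxM.
Qed.

Lemma is_MP_uniq A X Y : is_MP A X -> is_MP A Y -> X = Y.
Proof.
case=> AXA XAX AXT XAT [AYA YAY AYT YAT].
have AXE : A *m X = A *m X *m (A *m Y).
  by rewrite -AXT -{1}AYA -mulmxA trmx_mul AXT AYT.
have YAE : Y *m A = X *m A *m (Y *m A).
  by rewrite -YAT -{1}AXA !mulmxA -(mulmxA _ X A) trmx_mul XAT YAT mulmxA.
by rewrite -XAX -mulmxA AXE !mulmxA XAX -{2}YAY YAE -(mulmxA _ (Y *m A)) YAY.
Qed.

Lemma is_MP_tr A Ad : is_MP A Ad -> is_MP A^T Ad^T.
Proof.
case=> AAdA AdAAd AAdT AdAT; split.
- by rewrite -!trmx_mul mulmxA AAdA.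
- by rewrite -!trmx_mul mulmxA AdAAd.
- by rewrite -trmx_mul trmxK AdAT.
- by rewrite -trmx_mul trmxK AAdT.
Qed.

Lemma is_MP_absorb A Ad X :
  is_MP A Ad -> comm_mx A X -> comm_mx A^T X -> Ad *m X = Ad *m X *m A *m Ad.
Proof.
case=> AAdA AdAAd AAdT _ AX ATX.
have AdE : Ad = Ad *m Ad^T *m A^T.
  by rewrite -mulmxA -trmx_mul AAdT mulmxA AdAAd.
have ATE : A^T = A^T *m A *m Ad.
  by rewrite -{1}AAdA trmx_mul AAdT mulmxA.
rewrite {1}AdE -mulmxA ATX ATE -!mulmxA (mulmxA X) -ATX.
by rewrite !mulmxA -AdE.
Qed.

(** The transpose of [is_MP_absorb] for [(A^T, Ad^T)] gives
    [X Ad = Ad A X Ad]; both sides then agree since [A X = X A]. *)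
Lemma comm_mx_MP A Ad X :
  is_MP A Ad -> comm_mx A X -> comm_mx A^T X -> comm_mx Ad X.
Proof.
move=> mA AX ATX.
have XAdE : X *m Ad = Ad *m A *m X *m Ad.
  apply: trmx_inj; rewrite trmx_mul.
  rewrite (is_MP_absorb (is_MP_tr mA) (comm_mx_tr AX) (comm_mx_tr ATX)).
  by rewrite !trmx_mul !mulmxA.
by rewrite /comm_mx XAdE {1}(is_MP_absorb mA AX ATX) -(mulmxA Ad X) -AX mulmxA.
Qed.

End MoorePenrose.

Section CommutingFactors.

Variables (R : realType) (n : nat) (A C Ad Cd : 'M[R]_n).
Hypotheses (mA : is_MP A Ad) (mC : is_MP C Cd).
Hypotheses (AC : comm_mx A C) (ATC : comm_mx A^T C).

Lemma comm_A_trmxC : comm_mx A C^T.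
Proof. by apply: comm_mx_sym; rewrite -[A]trmxK; apply: comm_mx_tr. Qed.

Lemma comm_MPA_C : comm_mx Ad C.
Proof. exact: comm_mx_MP mA AC ATC. Qed.

Lemma comm_A_MPC : comm_mx A Cd.
Proof.
exact/comm_mx_sym/(comm_mx_MP mC (comm_mx_sym AC) (comm_mx_sym comm_A_trmxC)).
Qed.

Lemma comm_MPA_MPC : comm_mx Ad Cd.
Proof.
have trCAd := comm_mx_MP mA comm_A_trmxC (comm_mx_tr AC).
exact/comm_mx_sym/(comm_mx_MP mC (comm_mx_sym comm_MPA_C) (comm_mx_sym trCAd)).
Qed.

Lemma is_MP_mul : is_MP (A *m C) (Ad *m Cd).
Proof.
have [AAdA AdAAd AAdT AdAT] := mA; have [CCdC CdCCd CCdT CdCT] := mC.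
have AdC := comm_MPA_C; have ACd := comm_A_MPC; have AdCd := comm_MPA_MPC.
have CAd := comm_mx_sym AdC; have CdA := comm_mx_sym ACd.
split.
- rewrite [A *m C *m _]comm_mxACA // [_ *m (A *m C)]comm_mxACA ?AAdA ?CCdC //.
  exact/comm_mx_sym/comm_mxM.
- rewrite [Ad *m Cd *m _]comm_mxACA //.
  rewrite [_ *m (Ad *m Cd)]comm_mxACA ?AdAAd ?CdCCd //.
  exact/comm_mx_sym/comm_mxM.
- rewrite [A *m C *m _]comm_mxACA // trmx_mul AAdT CCdT.
  exact/comm_mx_sym/comm_mxMM.
- rewrite [Ad *m Cd *m _]comm_mxACA // trmx_mul AdAT CdCT.
  exact/comm_mx_sym/comm_mxMM.
Qed.

Variables B D : 'M[R]_n.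
Hypotheses (CdB : comm_mx Cd B) (AdD : comm_mx Ad D).

Lemma dmul_MP_dual :
  dmul (Ad, - (Ad *m B *m Ad)) (Cd, - (Cd *m D *m Cd))
  = (Ad *m Cd, - (Ad *m Cd *m (A *m D + B *m C) *m (Ad *m Cd))).
Proof.
have [_ AdAAd _ _] := mA; have [_ CdCCd _ _] := mC.
have CAd := comm_mx_sym comm_MPA_C; have CdA := comm_mx_sym comm_A_MPC.
have CdAd := comm_mx_sym comm_MPA_MPC.
rewrite /dmul /=; congr pair.
rewrite mulmxDr mulmxDl opprD mulmxN mulNmx; congr (- _ + - _).
- rewrite -!mulmxA (comm_mxCA _ CdA) (comm_mxCA _ (comm_mx_sym AdD)).
  by rewrite (comm_mxCA _ CdAd) !mulmxA AdAAd.
- rewrite -!mulmxA (comm_mxCA _ CdB) (comm_mxCA _ CAd) (comm_mxCA _ CdAd).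
  by rewrite (mulmxA Cd C) CdCCd.
Qed.

Lemma dmul_MP_comm :
  dmul (Ad, - (Ad *m B *m Ad)) (Cd, - (Cd *m D *m Cd))
  = dmul (Cd, - (Cd *m D *m Cd)) (Ad, - (Ad *m B *m Ad)).
Proof.
have AdCd := comm_MPA_MPC; have CdAd := comm_mx_sym AdCd.
rewrite /dmul /=; congr pair; first exact: AdCd.
rewrite !mulmxN !mulNmx addrC; congr (- _ + - _).
- by rewrite -!mulmxA (comm_mxCA _ CdAd) (comm_mxCA _ CdB) -AdCd.
- by rewrite -!mulmxA -AdCd (comm_mxCA _ (comm_mx_sym AdD)) (comm_mxCA _ CdAd).
Qed.

End CommutingFactors.

Theorem mainTheorem8 (R : realType) (n : nat) (A B C D Ad Cd ACd : 'M[R]_n) :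
  is_MP A Ad -> is_MP C Cd -> is_MP (A *m C) ACd ->
  is_DMPGI (A, B) (Ad, - (Ad *m B *m Ad)) ->
  is_DMPGI (C, D) (Cd, - (Cd *m D *m Cd)) ->
  is_DMPGI (dmul (A, B) (C, D))
           (ACd, - (ACd *m (A *m D + B *m C) *m ACd)) ->
  A *m C = C *m A -> A^T *m C = C *m A^T ->
  Cd *m B = B *m Cd -> Ad *m D = D *m Ad ->
  (ACd, - (ACd *m (A *m D + B *m C) *m ACd))
    = dmul (Ad, - (Ad *m B *m Ad)) (Cd, - (Cd *m D *m Cd)) /\
  dmul (Ad, - (Ad *m B *m Ad)) (Cd, - (Cd *m D *m Cd))
    = dmul (Cd, - (Cd *m D *m Cd)) (Ad, - (Ad *m B *m Ad)).
Proof.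
move=> mA mC mAC _ _ _ AC ATC CdB AdD.
rewrite (is_MP_uniq mAC (is_MP_mul mA mC AC ATC)).
split; first by rewrite (dmul_MP_dual mA mC AC ATC CdB AdD).
exact: (dmul_MP_comm mA mC AC ATC CdB AdD).
Qed.
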